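(* Let $n\geq 1$ and let $\Gamma'$ be a connected 3-regular graph with $n-1$ legs. Let $\Gamma_1,\Gamma_2$ be two graphs each obtained from $\Gamma'$ by adding a new vertex in the interior of some edge or leg of $\Gamma'$ and attaching a new leg to that vertex. Then $\Gamma_1$ and $\Gamma_2$ (which are 3-regular graphs with $n$ legs and the same first Betti number as $\Gamma'$) are linked.
   Context: A graph with $n$ legs consists of a finite nonempty vertex set, a finite set of half-edges, an involution on half-edges with exactly $n$ fixed points (legs), and an endpoint map from half-edges to vertices; edges are the 2-element orbits. Graphs are connected. Valency of $v$ = number of half-edges (including legs) at $v$; 3-regular means all valencies are 3. $b_1=|E|-|V|+1$. $\Gamma/e$ denotes contraction of an edge $e$. Strongly linked: non-loop edges $e_i\in E(\Gamma_i)$ and an isomorphism $\Gamma_1/e_1\cong\Gamma_2/e_2$ carrying the image vertex of $e_1$ to that of $e_2$; linked: joined by a finite chain of consecutively strongly linked graphs. *)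

From Stdlib Require Import Relations.
From HB Require Import structures.
From mathcomp Require Import all_boot.
Unset Printing Implicit Defensive.

(* The vertex set and the half-edge set are finite
   subsets [verts], [hes] of ambient finite types; [ginv] is the involution
   on half-edges and [gep] the endpoint map (only their values on [hes]
   matter). *)
Record graph := Graph {
  gV : finType;
  gH : finType;
  verts : {set gV};
  hes : {set gH};
  ginv : gH -> gH;
  gep : gH -> gV
}.
Arguments verts : clear implicits.
Arguments hes : clear implicits.
Arguments ginv : clear implicits.
Arguments gep : clear implicits.

Definition wf (G : graph) : Prop :=
  verts G != set0 /\
  (forall x, x \in hes G -> ginv G x \in hes G) /\
  (forall x, x \in hes G -> ginv G (ginv G x) = x) /\
  (forall x, x \in hes G -> gep G x \in verts G).

Definition legs (G : graph) : {set gH G} := [set x in hes G | ginv G x == x].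

Definition valency (G : graph) (v : gV G) : nat := #|[set x in hes G | gep G x == v]|.

Definition three_regular (G : graph) : Prop :=
  forall v, v \in verts G -> valency G v = 3.

Definition adj (G : graph) : rel (gV G) := fun u v =>
  [exists x in hes G, [&& ginv G x != x, gep G x == u & gep G (ginv G x) == v]].

Definition connected (G : graph) : Prop :=
  forall u v, u \in verts G -> v \in verts G -> connect (adj G) u v.

Definition is_graph (G : graph) : Prop := wf G /\ connected G.

Definition nonloop (G : graph) (h : gH G) : Prop :=
  h \in hes G /\ ginv G h != h /\ gep G h != gep G (ginv G h).

(* contraction of the edge {h, ginv h}: the endpoint of (ginv h) is merged
   into the endpoint of h (the image vertex of the edge is gep G h) *)
Definition contract (G : graph) (h : gH G) : graph :=
  let a := gep G h in let b := gep G (ginv G h) in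
  @Graph (gV G) (gH G) (verts G :\ b) (hes G :\ h :\ ginv G h) (ginv G)
    (fun x => if gep G x == b then a else gep G x).

Definition iso_at (G1 G2 : graph) (v1 : gV G1) (v2 : gV G2) : Prop :=
  exists (fV : gV G1 -> gV G2) (fH : gH G1 -> gH G2),
    {in verts G1 &, injective fV} /\ fV @: verts G1 = verts G2 /\
    {in hes G1 &, injective fH} /\ fH @: hes G1 = hes G2 /\
    (forall x, x \in hes G1 -> fH (ginv G1 x) = ginv G2 (fH x)) /\
    (forall x, x \in hes G1 -> fV (gep G1 x) = gep G2 (fH x)) /\
    fV v1 = v2.

Definition strongly_linked (G1 G2 : graph) : Prop :=
  is_graph G1 /\ is_graph G2 /\
  exists (h1 : gH G1) (h2 : gH G2), nonloop G1 h1 /\ nonloop G2 h2 /\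
    iso_at (contract G1 h1) (contract G2 h2) (gep G1 h1) (gep G2 h2).

Definition linked : graph -> graph -> Prop := clos_refl_trans graph strongly_linked.

(* Insert a new vertex (None) in the interior of the edge {h, ginv h}
   (or of the leg h if ginv h = h) and attach a new leg (inr 2) to it.
   New half-edges: inr 0 (paired with inl h), inr 1 (paired with
   inl (ginv h) if h is not a leg, otherwise inr 1 is the new outer leg),
   inr 2 (the new leg). *)
Definition sd_inv (G : graph) (h : gH G) (y : gH G + 'I_3) : gH G + 'I_3 :=
  let hl := ginv G h == h in
  match y with
  | inl x =>
      if x == h then inr (@Ordinal 3 0 isT)
      else if (x == ginv G h) && ~~ hl then inr (@Ordinal 3 1 isT)
      else inl (ginv G x)
  | inr i =>
      if val i == 0 then inl h
      else if (val i == 1) && ~~ hl then inl (ginv G h)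
      else inr i
  end.

Definition sd_ep (G : graph) (y : gH G + 'I_3) : option (gV G) :=
  match y with inl x => Some (gep G x) | inr _ => None end.

Definition subdivide (G : graph) (h : gH G) : graph :=
  @Graph (option (gV G)) (gH G + 'I_3)%type
    (None |: [set Some v | v in verts G])
    ([set inl x | x in hes G] :|: [set inr i | i : 'I_3])
    (@sd_inv G h) (@sd_ep G).

(* Subdividing an edge or leg of G and attaching a new leg there, then
   contracting one of the edges from the new vertex back to an old endpoint v,
   yields G with one extra leg at v, whichever half-edge at v was subdivided. Hence two subdivisions at half-edges with a common endpoint are
   strongly linked, and so are the subdivisions at the two halves of an edge.
   Connectivity of G chains these moves together. *)
From Stdlib Require Import Relations.
From HB Require Import structures.
From mathcomp Require Import all_boot.

Section WellFormed.
Variables (G : graph) (wfG : wf G).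

Lemma hes_ginv x : x \in hes G -> ginv G x \in hes G.
Proof. by case: wfG => _ [cl _]; apply: cl. Qed.

Lemma ginvK x : x \in hes G -> ginv G (ginv G x) = x.
Proof. by case: wfG => _ [_ [inv _]]; apply: inv. Qed.

Lemma verts_gep x : x \in hes G -> gep G x \in verts G.
Proof. by case: wfG => _ [_ [_ ep]]; apply: ep. Qed.

Lemma ginv_eq x y : x \in hes G -> y \in hes G -> (ginv G x == y) = (x == ginv G y).
Proof. by move=> xH yH; apply/eqP/eqP => [<-|->]; rewrite ginvK. Qed.

Lemma adj_sym : symmetric (adj G).
Proof.
move=> u w; apply/existsP/existsP => -[x /and3P[xH xl /andP[ex ew]]];
  exists (ginv G x); rewrite hes_ginv ?ginvK ?ex ?ew ?andbT //=;
  by apply: contra_neq xl => /(congr1 (ginv G)); rewrite ginvK.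
Qed.

End WellFormed.

Arguments hes_ginv {G} wfG {x}.
Arguments ginvK {G} wfG {x}.
Arguments verts_gep {G} wfG {x}.
Arguments ginv_eq {G} wfG {x y}.
Arguments adj_sym {G}.

Definition transport {A B C : finType} (f : A -> B) (g : A -> C) (S : {set A})
    (c0 : C) (b : B) : C :=
  if [pick a in S | f a == b] is Some a then g a else c0.

Section Transport.
Variables (A B C : finType) (f : A -> B) (g : A -> C) (S : {set A}) (c0 : C).

Lemma transportE a : {in S &, injective f} -> a \in S -> transport f g S c0 (f a) = g a.
Proof.
rewrite /transport => f_inj aS; case: pickP => [a' /andP[a'S /eqP fa'] | /(_ a)].
  by rewrite (f_inj _ _ a'S aS fa').
by rewrite aS eqxx.
Qed.

Lemma transport_out b : b \notin f @: S -> transport f g S c0 b = c0.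
Proof.
rewrite /transport => bS; case: pickP => [a /andP[aS /eqP fa] | //].
by rewrite -fa imset_f in bS.
Qed.

End Transport.

Record leg_extension (G C : graph) (fV : gV G -> gV C) (fH : gH G -> gH C)
    (l : gH C) (v : gV G) : Prop := LegExtension {
  leg_ext_vinj : {in verts G &, injective fV};
  leg_ext_verts : verts C = fV @: verts G;
  leg_ext_hinj : {in hes G &, injective fH};
  leg_ext_hes : hes C = l |: fH @: hes G;
  leg_ext_fresh : l \notin fH @: hes G;
  leg_ext_inv : {in hes G, forall x, ginv C (fH x) = fH (ginv G x)};
  leg_ext_ep : {in hes G, forall x, gep C (fH x) = fV (gep G x)};
  leg_ext_leg : ginv C l = l;
  leg_ext_leg_ep : gep C l = fV v
}.

Lemma leg_extension_iso (G C1 C2 : graph) fV1 fH1 l1 fV2 fH2 l2 (v : gV G) :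
  wf G -> v \in verts G ->
  leg_extension G C1 fV1 fH1 l1 v -> leg_extension G C2 fV2 fH2 l2 v ->
  iso_at C1 C2 (fV1 v) (fV2 v).
Proof.
move=> wfG vV.
(* The isomorphism is fH2 o fH1^-1, sending the leg l1 to l2. *)
case=> vinj1 verts1 hinj1 hes1 fresh1 inv1 ep1 leg1 legep1.
case=> vinj2 verts2 hinj2 hes2 fresh2 inv2 ep2 leg2 legep2.
pose fV := transport fV1 fV2 (verts G) (fV2 v).
pose fH := transport fH1 fH2 (hes G) l2.
have fVE a : a \in verts G -> fV (fV1 a) = fV2 a by exact: transportE.
have fHE x : x \in hes G -> fH (fH1 x) = fH2 x by exact: transportE.
have fH_leg : fH l1 = l2 by exact: transport_out.
have fH_fresh x : x \in hes G -> fH2 x != l2.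
  by move=> xH; apply: contraNneq fresh2 => <-; rewrite imset_f.
exists fV, fH; split; [|split; [|split; [|split; [|split; [|split]]]]].
- rewrite verts1 => _ _ /imsetP[a aV ->] /imsetP[b bV ->].
  by rewrite !fVE // => /vinj2 ->.
- rewrite verts1 verts2 -imset_comp; apply: eq_in_imset => a; exact: fVE.
- rewrite hes1 => y z /setU1P[-> | /imsetP[x xH ->]] /setU1P[-> | /imsetP[w wH ->]] //;
    rewrite ?fH_leg ?fHE //.
  + by move=> /esym/eqP; rewrite (negbTE (fH_fresh w wH)).
  + by move=> /eqP; rewrite (negbTE (fH_fresh x xH)).
  + by move=> /hinj2 ->.
- rewrite hes1 hes2 imsetU1 fH_leg -imset_comp; congr (_ |: _).
  apply: eq_in_imset => x; exact: fHE.
- rewrite hes1 => y /setU1P[-> | /imsetP[x xH ->]]; first by rewrite leg1 fH_leg leg2.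
  by rewrite inv1 // !fHE ?(hes_ginv wfG) // inv2.
- rewrite hes1 => y /setU1P[-> | /imsetP[x xH ->]].
    by rewrite legep1 fVE // fH_leg legep2.
  by rewrite ep1 // fHE // fVE ?(verts_gep wfG) // ep2.
- exact: fVE.
Qed.

Definition rename {T U : eqType} (r : T) (n : U) (x : T) : T + U :=
  if x == r then inr n else inl x.

Lemma rename_inj (T U : eqType) (r : T) (n : U) : injective (rename r n).
Proof.
rewrite /rename => x y; case: (eqVneq x r) => [->|xr]; case: (eqVneq y r) => [->|yr] //.
by case.
Qed.

Lemma mem_rename_imset (T U : finType) (A : {set T}) (r : T) (n : U) y :
  (y \in rename r n @: A) =
  if y is inl x then (x != r) && (x \in A) else (y == inr n) && (r \in A).
Proof.
apply/imsetP/idP => [[x xA ->] | ].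
  by rewrite /rename; case: (eqVneq x r) => [<-|xr] /=; rewrite ?eqxx ?xr.
case: y => [x /andP[xr xA] | i /andP[/eqP-> rA]].
  by exists x; rewrite // /rename (negbTE xr).
by exists r; rewrite // /rename eqxx.
Qed.

Notation sd_in := (inr (@Ordinal 3 0 isT)).
Notation sd_out := (inr (@Ordinal 3 1 isT)).
Notation sd_leg := (inr (@Ordinal 3 2 isT)).

Section Subdivide.
Variables (G : graph) (h : gH G).

Lemma subdivide_hes_inl x : (inl x \in hes (subdivide G h)) = (x \in hes G).
Proof.
rewrite /= in_setU mem_imset; last by move=> ? ? [].
by case: (x \in hes G); last by apply/imsetP => -[].
Qed.

Lemma subdivide_hes_inr i : inr i \in hes (subdivide G h).
Proof. by rewrite /= in_setU imset_f ?orbT. Qed.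

Lemma subdivide_verts_Some v : (Some v \in verts (subdivide G h)) = (v \in verts G).
Proof. by rewrite /= in_setU1 mem_imset //; move=> ? ? []. Qed.

Lemma subdivide_verts_None : None \in verts (subdivide G h).
Proof. by rewrite /= in_setU1 eqxx. Qed.

Lemma subdivide_inv_in : ginv (subdivide G h) (inl h) = sd_in.
Proof. by rewrite /= /sd_inv eqxx. Qed.

Lemma subdivide_inv_out : ginv G h != h -> ginv (subdivide G h) (inl (ginv G h)) = sd_out.
Proof. by move=> hl; rewrite /= /sd_inv (negbTE hl) eqxx. Qed.

Lemma contract_subdivide_verts x :
  gep (subdivide G h) (ginv (subdivide G h) (inl x)) = None ->
  verts (contract (subdivide G h) (inl x)) = [set Some v | v in verts G].
Proof. by rewrite /= => ->; rewrite setU1K //; apply/imsetP => -[]. Qed.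

End Subdivide.

Section SubdivideWellFormed.
Variables (G : graph) (h : gH G).
Hypotheses (wfG : wf G) (hH : h \in hes G).

Lemma subdivide_wf : wf (subdivide G h).
Proof.
split; first by apply/set0Pn; exists None; exact: subdivide_verts_None.
split; last split.
- case=> [x|i]; rewrite ?subdivide_hes_inl => yH; rewrite /= /sd_inv;
    do ![case: ifP => _]; rewrite ?subdivide_hes_inl ?subdivide_hes_inr ?hes_ginv //.
- case=> [x|i]; rewrite ?subdivide_hes_inl => yH; rewrite /= /sd_inv.
    case: (eqVneq x h) => [->|xh] /=; first by [].
    case: (eqVneq x (ginv G h)) => [xo|xo] /=; first by move: xh; rewrite xo => ->.
    rewrite (ginv_eq wfG yH hH) (negbTE xo) (ginv_eq wfG yH (hes_ginv wfG hH)) ginvK //.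
    by rewrite (negbTE xh) ginvK.
  case: i yH => -[|[|[|k]]] //= ilt _; rewrite (bool_irrelevance ilt isT) /=.
    by rewrite eqxx.
  case: (eqVneq (ginv G h) h) => [//|hl] /=.
  by rewrite (negbTE hl) eqxx.
- case=> [x|i]; rewrite ?subdivide_hes_inl => yH; last exact: subdivide_verts_None.
  by rewrite subdivide_verts_Some verts_gep.
Qed.

Lemma subdivide_nonloop_in : nonloop (subdivide G h) (inl h).
Proof. by split; rewrite ?subdivide_hes_inl ?subdivide_inv_in. Qed.

(* After contracting [inl h], the half-edge [sd_out] plays the role of [h]. *)
Lemma contract_subdivide_leg_extension :
  leg_extension G (contract (subdivide G h) (inl h)) Some
    (rename h (@Ordinal 3 1 isT)) sd_leg (gep G h).
Proof.
have inv_in := subdivide_inv_in G h.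
split.
- by move=> ? ? _ _ [].
- by apply: contract_subdivide_verts; rewrite inv_in.
- by move=> x y _ _; apply: rename_inj.
- apply/setP => y; rewrite /contract inv_in /= !in_setD1 in_setU1 mem_rename_imset.
  by case: y => [x | [[|[|[|i]]] ilt]]; rewrite ?subdivide_hes_inl ?subdivide_hes_inr.
- by rewrite mem_rename_imset.
- move=> x xH; rewrite /= /sd_inv /rename.
  case: (eqVneq x h) => [->|xh] /=; first by case: eqP.
  rewrite (negbTE xh) (ginv_eq wfG xH hH); case: (eqVneq x (ginv G h)) => [xo|//].
  by move: xh; rewrite xo => ->.
- move=> x xH; rewrite /contract inv_in /= /rename.
  by case: (eqVneq x h) => [->|].
- by [].
- by rewrite /contract inv_in.
Qed.

Hypothesis h_not_leg : ginv G h != h.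

Lemma subdivide_nonloop_out : nonloop (subdivide G h) (inl (ginv G h)).
Proof.
by split; rewrite ?subdivide_hes_inl ?subdivide_inv_out ?(hes_ginv wfG).
Qed.

(* After contracting [inl (ginv G h)], [sd_in] plays the role of [ginv G h]. *)
Lemma contract_subdivide_opp_leg_extension :
  leg_extension G (contract (subdivide G h) (inl (ginv G h))) Some
    (rename (ginv G h) (@Ordinal 3 0 isT)) sd_leg (gep G (ginv G h)).
Proof.
have inv_out := subdivide_inv_out G h h_not_leg.
have hoH := hes_ginv wfG hH.
split.
- by move=> ? ? _ _ [].
- by apply: contract_subdivide_verts; rewrite inv_out.
- by move=> x y _ _; apply: rename_inj.
- apply/setP => y; rewrite /contract inv_out /= !in_setD1 in_setU1 mem_rename_imset.
  by case: y => [x | [[|[|[|i]]] ilt]]; rewrite ?subdivide_hes_inl ?subdivide_hes_inr ?hoH.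
- by rewrite mem_rename_imset.
- move=> x xH; rewrite /= /sd_inv /rename.
  case: (eqVneq x (ginv G h)) => [->|xo] /=.
    by rewrite ginvK // eq_sym (negbTE h_not_leg).
  by rewrite (negbTE xo) (ginv_eq wfG xH hoH) ginvK.
- move=> x xH; rewrite /contract inv_out /= /rename.
  by case: (eqVneq x (ginv G h)) => [->|].
- by [].
- by rewrite /contract inv_out.
Qed.

End SubdivideWellFormed.

Arguments subdivide_wf {G h}.
Arguments contract_subdivide_leg_extension {G h}.

Section Linking.
Variable G : graph.
Hypothesis isG : is_graph G.

Let wfG : wf G := isG.1.

Lemma connect_subdivide_adj h u w : h \in hes G ->
  adj G u w -> connect (adj (subdivide G h)) (Some u) (Some w).
Proof.
move=> hH /existsP[x /and3P[xH xl /andP[/eqP<- /eqP<-]]].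
have via_new : ginv G h != h ->
    connect (adj (subdivide G h)) (Some (gep G h)) (Some (gep G (ginv G h))).
  move=> hl; apply: (@connect_trans _ _ None); apply/connect1/existsP.
    by exists (inl h); rewrite subdivide_hes_inl hH subdivide_inv_in /= !eqxx.
  by exists sd_out; rewrite subdivide_hes_inr /= /sd_inv /= hl /= !eqxx.
case: (eqVneq x h) => [xh|xh]; first by rewrite xh in xl *; exact: via_new.
case: (eqVneq x (ginv G h)) => [xo|xo].
  have hl : ginv G h != h by rewrite -xo.
  rewrite (sym_connect_sym (adj_sym (subdivide_wf wfG hH))) xo ginvK //.
  exact: via_new.
apply/connect1/existsP; exists (inl x).
by rewrite subdivide_hes_inl xH /= /sd_inv (negbTE xh) (negbTE xo) /= xl !eqxx.
Qed.

Lemma connect_subdivide h u w : h \in hes G ->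
  connect (adj G) u w -> connect (adj (subdivide G h)) (Some u) (Some w).
Proof.
move=> hH /connectP[p]; elim: p u => [|u' p IH] u /=; first by move=> _ ->.
case/andP=> uu' pu' wl; apply: (@connect_trans _ _ (Some u')).
  exact: connect_subdivide_adj.
exact: IH pu' wl.
Qed.

Lemma subdivide_is_graph h : h \in hes G -> is_graph (subdivide G h).
Proof.
move=> hH; split; first exact: subdivide_wf.
have to_hub s : s \in verts (subdivide G h) ->
    connect (adj (subdivide G h)) s (Some (gep G h)).
  case: s => [u|_]; last first.
    by apply/connect1/existsP; exists sd_in; rewrite subdivide_hes_inr /= eqxx.
  rewrite subdivide_verts_Some => uV; apply: connect_subdivide => //.
  exact: isG.2 _ _ uV (verts_gep wfG hH).
move=> s t sV tV; apply: (@connect_trans _ _ (Some (gep G h))); first exact: to_hub.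
by rewrite (sym_connect_sym (adj_sym (subdivide_wf wfG hH))) to_hub.
Qed.

Lemma subdivide_strongly_linked_at_vertex h1 h2 :
  h1 \in hes G -> h2 \in hes G -> gep G h1 = gep G h2 ->
  strongly_linked (subdivide G h1) (subdivide G h2).
Proof.
move=> h1H h2H e12; split; [exact: subdivide_is_graph | split; [exact: subdivide_is_graph |]].
exists (inl h1), (inl h2).
split; [exact: subdivide_nonloop_in | split; [exact: subdivide_nonloop_in |]].
have E2 := contract_subdivide_leg_extension wfG h2H; rewrite -e12 in E2.
rewrite /= -e12; apply: leg_extension_iso E2 => //; first exact: verts_gep.
exact: contract_subdivide_leg_extension.
Qed.

Lemma subdivide_strongly_linked_opp h :
  h \in hes G -> ginv G h != h ->
  strongly_linked (subdivide G h) (subdivide G (ginv G h)).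
Proof.
move=> hH hl; have hoH := hes_ginv wfG hH.
split; [exact: subdivide_is_graph | split; [exact: subdivide_is_graph |]].
exists (inl (ginv G h)), (inl (ginv G h)); split; first exact: subdivide_nonloop_out.
split; first exact: subdivide_nonloop_in.
apply: leg_extension_iso (verts_gep wfG hoH) _ _ => //.
  exact: contract_subdivide_opp_leg_extension.
exact: contract_subdivide_leg_extension.
Qed.

Lemma subdivide_linked a b : a \in hes G -> b \in hes G ->
  connect (adj G) (gep G a) (gep G b) -> linked (subdivide G a) (subdivide G b).
Proof.
move=> aH bH /connectP[p]; elim: p a aH => [|w p IH] a aH /=.
  by move=> _ eab; apply: rt_step; apply: subdivide_strongly_linked_at_vertex.
case/andP=> /existsP[x /and3P[xH xl /andP[/eqP ax /eqP xw]]] pw eb.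
apply: (@rt_trans _ _ _ (subdivide G x)).
  by apply: rt_step; apply: subdivide_strongly_linked_at_vertex.
apply: (@rt_trans _ _ _ (subdivide G (ginv G x))).
  exact/rt_step/subdivide_strongly_linked_opp.
by apply: IH; rewrite ?(hes_ginv wfG) ?xw.
Qed.

End Linking.

Theorem mainTheorem11 (n : nat) (G' : graph) (h1 h2 : gH G') :
  1 <= n ->
  is_graph G' -> three_regular G' -> #|legs G'| = n - 1 ->
  h1 \in hes G' -> h2 \in hes G' ->
  linked (subdivide G' h1) (subdivide G' h2).
Proof.
move=> _ isG _ _ h1H h2H; apply: subdivide_linked => //.
by apply: isG.2; apply: (verts_gep isG.1).
Qed.
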